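(* Let $n,d,r,k$ be positive integers with $n\geq\mathrm{R}\big(2d,\,r+2d-1,\,2^{k2^{2d^2+d}}\big)$. Then for every collection $\boldsymbol\lambda=\langle\lambda_F: F\in\binom{\binom{[n]}{\leq 2}}{\leq d}\rangle$ of elements of $\mathbb{Z}_{2^k}$ there exists $X\subseteq[n]$ with $|X|=r$ such that $\boldsymbol\lambda$ is canonical in $X$.
   Context: For a set $S$ and integer $j\geq 1$, $\binom{S}{\leq j}$ denotes the set of nonempty subsets of $S$ with at most $j$ elements, and $\binom{S}{j}$ those with exactly $j$ elements. $\mathbb{Z}_{2^k}=\mathbb{Z}/2^k\mathbb{Z}$. Ramsey numbers: for positive integers $\ell\leq m$ and $c$, $\mathrm{R}(\ell,m,c)$ is the least positive integer $N$ such that for every $n\geq N$ and every colouring $\chi\colon\binom{[n]}{\ell}\to[c]$ there is $X\in\binom{[n]}{m}$ with $\chi$ constant on $\binom{X}{\ell}$. Type: for a nonempty set $F$ of nonempty subsets of $[n]$, write $\bigcup F=\{u_1<\dots<u_\ell\}$ and set $\tau(F)=\{S\subseteq[\ell]: \{u_i: i\in S\}\in F\}$. Canonical: a collection $\boldsymbol\lambda=\langle\lambda_F: F\in\binom{\binom{[n]}{\leq 2}}{\leq d}\rangle$ is canonical in a nonempty $X\subseteq[n]$ if $\lambda_{F_1}=\lambda_{F_2}$ whenever $F_1,F_2\in\binom{\binom{X}{\leq 2}}{\leq d}$ satisfy $\tau(F_1)=\tau(F_2)$. *)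

From mathcomp Require Import all_boot all_order all_algebra.
Set Implicit Arguments. Unset Strict Implicit. Unset Printing Implicit Defensive.

(* [n] is represented by 'I_n = {0,...,n-1} (order-preserving relabelling). *)

(* Ramsey property: for every m' >= N and every colouring of the l-subsets of
   [m'] with c colours there is an m-subset X on whose l-subsets chi is constant.
   (A colouring of l-subsets is given as a function on all subsets; only its
   values on l-subsets matter.) *)
Definition ramsey_prop (l m c N : nat) : Prop :=
  forall n', N <= n' -> forall chi : {set 'I_n'} -> 'I_c,
    exists X : {set 'I_n'}, #|X| = m /\
      (forall S1 S2 : {set 'I_n'}, S1 \subset X -> S2 \subset X ->
         #|S1| = l -> #|S2| = l -> chi S1 = chi S2).

Definition is_ramsey_number (l m c N : nat) : Prop :=
  ramsey_prop l m c N /\ forall N', ramsey_prop l m c N' -> N <= N'.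

Section Canon.
Variable n : nat.

(* F is in binom(binom(S, <=2), <=d): a nonempty set of at most d nonempty
   subsets of S, each of size at most 2. *)
Definition in_dom (d : nat) (S : {set 'I_n}) (F : {set {set 'I_n}}) : bool :=
  [&& F != set0, #|F| <= d &
      [forall A in F, [&& A != set0, #|A| <= 2 & A \subset S]]].

Definition bigU (F : {set {set 'I_n}}) : {set 'I_n} := \bigcup_(A in F) A.

Definition usort (F : {set {set 'I_n}}) : seq nat :=
  sort leq [seq val x | x <- enum (bigU F)].

Definition uset (F : {set {set 'I_n}}) (S : {set 'I_n}) : {set 'I_n} :=
  [set x : 'I_n | [exists i in S, nth 0 (usort F) i == val x]].

(* type tau(F) = {S subset of [l] : {u_i : i in S} in F}, where l = |bigU F|
   and [l] is represented by {0,...,l-1} (inside 'I_n, as l <= n). *)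
Definition tau (F : {set {set 'I_n}}) : {set {set 'I_n}} :=
  [set S : {set 'I_n} | (S \subset [set i : 'I_n | val i < #|bigU F|])
                        && (uset F S \in F)].

Definition canonical_in {V : Type} (d : nat) (lam : {set {set 'I_n}} -> V)
    (X : {set 'I_n}) : Prop :=
  forall F1 F2, in_dom d X F1 -> in_dom d X F2 -> tau F1 = tau F2 ->
    lam F1 = lam F2.

End Canon.

From Pilot Require Import Defs.
From mathcomp Require Import all_boot all_order all_algebra.
From mathcomp Require Import zify.
Set Implicit Arguments. Unset Strict Implicit. Unset Printing Implicit Defensive.

(* Colour each 2d-subset Y of [n] by the function sending every type T to the
   value of lambda at the copy of T inside Y, i.e. at the image of T under the
   increasing bijection [2d] -> Y. There are at most 2^(k 2^(2d^2+d)) colours,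
   so Ramsey's theorem gives a monochromatic X of size r + 2d - 1. Let X' be
   its r smallest elements. Any F in the domain over X' spans at most 2d
   points of X', which can be padded by large elements of X to a 2d-set Y in
   which they form an initial segment; then F is the copy of tau(F) inside Y,
   so lambda(F) is the colour of Y evaluated at tau(F), which depends on
   tau(F) only. *)

Lemma count_enum_set (T : finType) (B : {set T}) (P : pred T) :
  count P (enum B) = #|[set y in B | P y]|.
Proof.
rewrite cardE -size_filter /enum_mem -filter_predI.
by apply: congr1; apply: eq_filter => y /=; rewrite !inE andbC.
Qed.

Lemma index_sorted_ltn (s : seq nat) v : sorted ltn s -> v \in s ->
  index v s = count (fun w => w < v) s.
Proof.
elim: s => [//|a s IH] /= Hp.
have Ha := order_path_min ltn_trans Hp.
have [->|ne] := eqVneq v a => Hv.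
  rewrite ltnn add0n; apply/esym/eqP; rewrite -leqn0 leqNgt -has_count.
  by apply/hasPn => w /(allP Ha) aw; rewrite -leqNgt ltnW.
move: Hv; rewrite in_cons (negPf ne) /= => Hv.
by rewrite IH ?(path_sorted Hp) // (allP Ha v Hv) add1n.
Qed.

Section Rank.
Variable n' : nat.
Local Notation n := n'.+1.
Implicit Types (A B S X Y : {set 'I_n}) (x y : 'I_n).

Definition sortB B : seq nat := sort leq [seq val x | x <- enum B].

(* the image of a set S of positions under the increasing enumeration of B;
   [uset F S] is [usetB (bigU F) S] *)
Definition usetB B S : {set 'I_n} :=
  [set x : 'I_n | [exists i in S, nth 0 (sortB B) i == val x]].

Definition rank B x := #|[set y in B | val y < val x]|.

(* [rk B x] is meaningful only for [x \in B], where [rank B x < n] *)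
Definition rk B x : 'I_n := inord (rank B x).

Definition posB B A : {set 'I_n} := [set rk B x | x in A].

Definition below (j : nat) : {set 'I_n} := [set i : 'I_n | val i < j].

Definition smallest (r : nat) X : {set 'I_n} := usetB X (below r).

Definition initial_in B Y : Prop :=
  B \subset Y /\ {in B & Y :\: B, forall x y, val x < val y}.

Lemma sortB_uniq B : uniq (sortB B).
Proof. by rewrite sort_uniq map_inj_uniq ?enum_uniq //; exact: val_inj. Qed.

Lemma sortB_sorted B : sorted ltn (sortB B).
Proof. by rewrite ltn_sorted_uniq_leq sortB_uniq sort_sorted //; exact: leq_total. Qed.

Lemma size_sortB B : size (sortB B) = #|B|.
Proof. by rewrite size_sort size_map cardE. Qed.

Lemma mem_sortB B x : (val x \in sortB B) = (x \in B).
Proof. by rewrite mem_sort mem_map ?mem_enum //; exact: val_inj. Qed.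

Lemma rank_count B x : rank B x = count (fun w => w < val x) (sortB B).
Proof.
rewrite /rank /sortB (permP (permEl (perm_sort _ _))) count_map count_enum_set.
by apply: eq_card => y; rewrite !inE.
Qed.

Lemma nth_sortB B (i : nat) x : i < #|B| ->
  (nth 0 (sortB B) i == val x) = (x \in B) && (rank B x == i).
Proof.
rewrite -size_sortB => hi; case xB: (x \in B) => /=.
- rewrite rank_count -index_sorted_ltn ?sortB_sorted ?mem_sortB //.
  change (\val x) with (nat_of_ord x).
  apply/eqP/eqP => [<-|<-]; first by rewrite index_uniq // sortB_uniq.
  by rewrite nth_index ?mem_sortB.
- by apply/negbTE/eqP => h; move: (mem_nth 0 hi); rewrite h mem_sortB xB.
Qed.

Lemma rank_lt B x : x \in B -> rank B x < #|B|.
Proof.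
move=> xB; rewrite (cardsD1 x B) xB add1n ltnS.
apply: subset_leq_card; apply/subsetP => y; rewrite !inE => /andP[yB lt].
by rewrite yB andbT; apply/eqP => e; move: lt; rewrite e ltnn.
Qed.

Lemma val_rk B x : x \in B -> val (rk B x) = rank B x.
Proof.
move=> xB; rewrite /rk /= inordK //.
by apply: leq_trans (rank_lt xB) _; rewrite -[X in _ <= X]card_ord max_card.
Qed.

Lemma rank_mono B x y : val y <= val x -> rank B y <= rank B x.
Proof.
move=> le; apply: subset_leq_card; apply/subsetP => z; rewrite !inE.
by case/andP=> -> /leq_trans; apply.
Qed.

Lemma rank_strict B x y : x \in B -> val x < val y -> rank B x < rank B y.
Proof.
move=> xB lt; rewrite /rank [X in _ < X](cardsD1 x) inE xB lt add1n ltnS.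
apply: subset_leq_card; apply/subsetP => z; rewrite !inE => /andP[zB lz].
by rewrite zB (ltn_trans lz lt) !andbT; apply/eqP => e; move: lz; rewrite e ltnn.
Qed.

Lemma rank_inj B x y : x \in B -> y \in B -> rank B x = rank B y -> x = y.
Proof.
move=> xB yB e; apply: val_inj; case: (ltngtP (val x) (val y)) => // lt.
- by move: (rank_strict xB lt); rewrite e ltnn.
- by move: (rank_strict yB lt); rewrite e ltnn.
Qed.

Lemma rank_surj B (i : nat) : i < #|B| -> exists2 y, y \in B & rank B y = i.
Proof.
move=> hi; have := mem_nth 0 (leq_trans hi (eq_leq (esym (size_sortB B)))).
rewrite mem_sort => /mapP [y]; rewrite mem_enum => yB e.
by exists y => //; apply/eqP; move: (nth_sortB y hi); rewrite e eqxx yB.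
Qed.

Lemma below_mono j j' : j <= j' -> below j \subset below j'.
Proof. by move=> h; apply/subsetP => i; rewrite !inE => /leq_trans; apply. Qed.

Lemma card_below j : j <= n -> #|below j| = j.
Proof.
move=> hj; have -> : below j = [set widen_ord hj i | i in 'I_j].
  apply/setP => i; rewrite inE.
  apply/idP/imsetP => [lt|[i' _ ->]] /=; last exact: ltn_ord.
  by exists (Ordinal lt) => //; apply: val_inj.
by rewrite card_imset ?card_ord // => a b /(congr1 val) /= e; apply: val_inj.
Qed.

Lemma in_usetB B S x : S \subset below #|B| ->
  (x \in usetB B S) = (x \in B) && [exists i in S, val i == rank B x].
Proof.
move=> /subsetP hS; have hS' i : i \in S -> val i < #|B|.
  by move=> iS; have := hS i iS; rewrite inE.
rewrite inE; case xB: (x \in B) => /=.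
- apply/existsP/existsP => -[i /andP[iS /eqP h]]; exists i; rewrite iS /=.
  + by move: (nth_sortB x (hS' i iS)); rewrite h eqxx xB /= => /esym/eqP ->.
  + by rewrite nth_sortB ?hS' // xB h eqxx.
- by apply/existsP => -[i /andP[iS]]; rewrite nth_sortB ?hS' // xB.
Qed.

Lemma posB_below B A : A \subset B -> posB B A \subset below #|B|.
Proof.
move=> /subsetP AB; apply/subsetP => i /imsetP [x xA ->].
by rewrite inE val_rk ?AB // rank_lt ?AB.
Qed.

Lemma usetB_posB B A : A \subset B -> usetB B (posB B A) = A.
Proof.
move=> AB; apply/setP => x; rewrite in_usetB ?posB_below //.
case xB: (x \in B) => /=; last first.
  by apply/esym/negbTE; apply: contraFN xB; apply: (subsetP AB).
apply/existsP/idP => [[i /andP[/imsetP [a aA ->] /eqP]]|xA].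
  by rewrite val_rk ?(subsetP AB) // => /(rank_inj (subsetP AB a aA) xB) <-.
by exists (rk B x); rewrite imset_f //= val_rk.
Qed.

Lemma posB_usetB B S : S \subset below #|B| -> posB B (usetB B S) = S.
Proof.
move=> hS; apply/setP => i; apply/imsetP/idP => [[x]|iS].
  rewrite in_usetB // => /andP[xB /existsP [j /andP[jS /eqP e]]] ->.
  by have -> : rk B x = j by apply: val_inj; rewrite val_rk.
have := subsetP hS i iS; rewrite inE => /rank_surj [y yB ry].
exists y; last by apply: val_inj; rewrite val_rk.
by rewrite in_usetB // yB; apply/existsP; exists i; rewrite iS ry eqxx.
Qed.

Lemma card_usetB B S : S \subset below #|B| -> #|usetB B S| = #|S|.
Proof.
move=> hS; rewrite -{2}(posB_usetB hS) card_in_imset //.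
move=> x y; rewrite !in_usetB // => /andP[xB _] /andP[yB _] e.
by apply: (rank_inj xB yB); rewrite -!val_rk // e.
Qed.

Lemma usetB_sub B S : S \subset below #|B| -> usetB B S \subset B.
Proof. by move=> hS; apply/subsetP => x; rewrite in_usetB // => /andP[]. Qed.

Lemma rank_initial B Y x : initial_in B Y -> x \in B -> rank Y x = rank B x.
Proof.
move=> [BY lt] xB; apply: eq_card => y; rewrite !inE.
case yB: (y \in B); first by rewrite (subsetP BY).
case yY: (y \in Y) => //=; apply/negbTE; rewrite -leqNgt ltnW // lt //.
by rewrite inE yB.
Qed.

Lemma card_le_rank_initial B Y x : initial_in B Y -> x \in Y :\: B ->
  #|B| <= rank Y x.
Proof.
move=> [BY lt] xYB; apply: subset_leq_card; apply/subsetP => y yB.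
by rewrite inE (subsetP BY) // lt.
Qed.

Lemma usetB_initial B Y S : initial_in B Y -> S \subset below #|B| ->
  usetB Y S = usetB B S.
Proof.
move=> iBY hS; have hSY : S \subset below #|Y|.
  by apply: subset_trans hS (below_mono (subset_leq_card iBY.1)).
apply/setP => x; rewrite !in_usetB //.
case xB: (x \in B); first by rewrite (subsetP iBY.1) // (rank_initial iBY xB).
case xY: (x \in Y) => //=; apply/negbTE/existsP => -[i /andP[iS /eqP e]].
have := subsetP hS i iS; rewrite inE /= e ltnNge.
by rewrite card_le_rank_initial // inE xB.
Qed.

Lemma in_smallest r X x : r <= #|X| ->
  (x \in smallest r X) = (x \in X) && (rank X x < r).
Proof.
move=> rX; rewrite in_usetB ?below_mono //; case xX: (x \in X) => //=.
apply/existsP/idP => [[i /andP[]]|lt]; first by rewrite inE => lt /eqP <-.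
by exists (rk X x); rewrite inE /= !val_rk // lt /=.
Qed.

Lemma card_smallest r X : r <= #|X| -> #|smallest r X| = r.
Proof.
move=> rX; rewrite card_usetB ?below_mono // card_below //.
by apply: leq_trans rX _; rewrite -[X in _ <= X]card_ord max_card.
Qed.

Lemma smallest_sub r X : r <= #|X| -> smallest r X \subset X.
Proof. by move=> rX; rewrite usetB_sub ?below_mono. Qed.

Lemma smallest_lt r X x y : r <= #|X| ->
  x \in smallest r X -> y \in X :\: smallest r X -> val x < val y.
Proof.
move=> rX; rewrite in_setD !in_smallest // => /andP[_ lx] /andP[+ yX].
rewrite yX /= -leqNgt => ly; rewrite ltnNge; apply/negP => le.
by have := leq_ltn_trans (rank_mono X le) lx; rewrite ltnNge ly.
Qed.

(* pad B by the j smallest elements of X outside its r smallest ones *)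
Lemma initial_extension r j X B : r + j <= #|X| -> B \subset smallest r X ->
  exists2 Y, initial_in B Y & Y \subset X /\ #|Y| = #|B| + j.
Proof.
move=> rjX BS; have rX : r <= #|X| by lia.
set D := X :\: smallest r X.
have cD : #|D| = #|X| - r.
  by rewrite cardsD (setIidPr (smallest_sub rX)) card_smallest.
have jD : j <= #|D| by lia.
have ED : smallest j D \subset D := smallest_sub jD.
have BD x : x \in B -> x \notin D.
  by move=> xB; rewrite inE (subsetP BS).
exists (B :|: smallest j D); last split.
- split; first exact: subsetUl.
  move=> x y xB; rewrite in_setD in_setU => /andP[/negPf -> /= yE].
  exact: smallest_lt rX (subsetP BS x xB) (subsetP ED y yE).
- rewrite subUset (subset_trans BS (smallest_sub rX)) /=.
  by apply: subset_trans ED _; apply: subsetDl.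
- rewrite cardsU card_smallest //.
  suff -> : B :&: smallest j D = set0 by rewrite cards0 subn0.
  apply/setP => x; rewrite in_setI in_set0; apply/negbTE/andP => -[xB xE].
  by move: (BD x xB); rewrite (subsetP ED).
Qed.

End Rank.

Section Types.
Variable n' : nat.
Local Notation n := n'.+1.
Local Notation bigU := Defs.bigU.
Implicit Types (A S Y Z : {set 'I_n}) (F : {set {set 'I_n}}).

Lemma in_domP d Z F : in_dom d Z F ->
  [/\ F != set0, #|F| <= d &
      forall A, A \in F -> [/\ A != set0, #|A| <= 2 & A \subset Z]].
Proof. by case/and3P => h1 h2 /forall_inP h3; split => // A /h3 /and3P[]. Qed.

Lemma bigU_sup F A : A \in F -> A \subset bigU F.
Proof. by move=> AF; rewrite (bigcup_sup A AF). Qed.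

Lemma bigU_subset d Z F : in_dom d Z F -> bigU F \subset Z.
Proof. by case/in_domP => _ _ h; apply/bigcupsP => A /h []. Qed.

Lemma card_bigU d Z F : in_dom d Z F -> 0 < #|bigU F| <= 2 * d.
Proof.
case/in_domP => /set0Pn [A0 A0F] cF h; apply/andP; split.
  case: (h A0 A0F) => /set0Pn [x xA] _ _.
  by apply/card_gt0P; exists x; apply: (subsetP (bigU_sup A0F)).
apply: leq_trans (leq_card_cover F).1 _.
apply: (@leq_trans (\sum_(A in F) 2)); first by apply: leq_sum => A /h [].
by rewrite sum_nat_const mulnC leq_mul2l cF orbT.
Qed.

Lemma tauE F : tau F = [set posB (bigU F) A | A in F].
Proof.
apply/setP => S; rewrite inE; apply/andP/imsetP => [[hS hU]|[A AF ->]].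
  by exists (usetB (bigU F) S); last exact/esym/posB_usetB.
split; first exact: posB_below (bigU_sup AF).
by change (usetB (bigU F) (posB (bigU F) A) \in F); rewrite usetB_posB ?bigU_sup.
Qed.

Lemma tau_sub_below F S : S \in tau F -> S \subset below n' #|bigU F|.
Proof. by rewrite inE => /andP[]. Qed.

Lemma usetB_tau F : [set usetB (bigU F) S | S in tau F] = F.
Proof.
rewrite tauE -imset_comp; under eq_in_imset => A AF do
  rewrite /= usetB_posB ?bigU_sup //.
exact: imset_id.
Qed.

Lemma usetB_tau_initial F Y : initial_in (bigU F) Y ->
  [set usetB Y S | S in tau F] = F.
Proof.
move=> iFY; rewrite -[RHS]usetB_tau; apply: eq_in_imset => S /tau_sub_below.
exact: usetB_initial.
Qed.

Lemma tau_small d Z F S : in_dom d Z F -> S \in tau F -> S != set0 /\ #|S| <= 2.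
Proof.
move=> /in_domP [_ _ h]; rewrite tauE => /imsetP [A /h [/set0Pn [x xA] c2 _] ->].
split; first by apply/set0Pn; exists (rk (bigU F) x); rewrite imset_f.
exact: leq_trans (leq_imset_card _ _) c2.
Qed.

End Types.

Notation small_set m := {A : {set 'I_m} | (A != set0) && (#|A| <= 2)}.

Lemma card_small_set m : #|{: small_set m}| = m + 'C(m, 2).
Proof.
pose draws k := [set A : {set 'I_m} | #|A| == k].
rewrite card_sig.
have -> : #|[pred A : {set 'I_m} | (A != set0) && (#|A| <= 2)]| =
          #|draws 1 :|: draws 2|.
  by apply: eq_card => A; rewrite !inE -card_gt0; case: #|A| => [|[|[|q]]].
rewrite cardsU !card_draws card_ord bin1.
suff -> : draws 1 :&: draws 2 = set0 by rewrite cards0 subn0.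
by apply/setP => A; rewrite !inE; case: #|A| => [|[|[|q]]].
Qed.

Lemma card_type_colours (V : finType) m :
  #|{: {ffun {set small_set m} -> V}}| = #|V| ^ 2 ^ (m + 'C(m, 2)).
Proof.
rewrite card_ffun -card_small_set -(cardsT (small_set m)) -card_powerset; congr (_ ^ _).
by apply: eq_card => A; rewrite !inE subsetT.
Qed.

Lemma card_type_colours_Zp d k : 0 < k ->
  #|{: {ffun {set small_set (2 * d)} -> 'Z_(2 ^ k)}}| = 2 ^ (k * 2 ^ (2 * d ^ 2 + d)).
Proof.
move=> k0; rewrite card_type_colours card_ord Zp_cast; last by rewrite (@leq_exp2l 2 1 k).
rewrite bin2 -expnM; congr (2 ^ (k * 2 ^ _)).
have -> : (2 * d * (2 * d).-1)./2 = d * (2 * d).-1 by rewrite -mulnA mul2n doubleK.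
rewrite -mulnn; lia.
Qed.

Section TypeColouring.
Variables (n' m : nat) (V : Type).
Local Notation n := n'.+1.
Hypothesis hm : m <= n.
Implicit Types (Y : {set 'I_n}) (F T : {set {set 'I_n}}).

Definition widen_set (A : {set 'I_m}) : {set 'I_n} := [set widen_ord hm x | x in A].

Definition type_code F : {set small_set m} := [set A | widen_set (val A) \in tau F].

Definition type_colour (lam : {set {set 'I_n}} -> V) Y :
    {ffun {set small_set m} -> V} :=
  [ffun s : {set small_set m} =>
     lam [set usetB Y S | S in [set widen_set (val A) | A in s]]].

Lemma widen_set_code T :
  (forall S, S \in T -> [/\ S != set0, #|S| <= 2 & S \subset below n' m]) ->
  [set widen_set (val A) | A in [set A : small_set m | widen_set (val A) \in T]] = T.
Proof.
move=> hT; apply/setP => S; apply/imsetP/idP => [[A]|ST]; first by rewrite inE => h ->.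
have [ne c2 /subsetP Sm] := hT S ST.
pose P := [set j : 'I_m | widen_ord hm j \in S].
have eP : widen_set P = S.
  apply/setP => x; apply/imsetP/idP => [[j]|xS]; first by rewrite inE => h ->.
  have hx : val x < m by have := Sm x xS; rewrite inE.
  exists (Ordinal hx); last exact: val_inj.
  by rewrite inE (_ : widen_ord hm (Ordinal hx) = x) //; apply: val_inj.
have cP : #|P| = #|S|.
  by rewrite -eP card_imset // => a b /(congr1 val) /= e; apply: val_inj.
have hP : (P != set0) && (#|P| <= 2).
  by rewrite cP c2 andbT; apply: contraNneq ne => P0; rewrite -eP P0 /widen_set imset0.
by exists (exist _ P hP); rewrite ?inE /= eP.
Qed.

Lemma type_colourE d Z F Y lam : in_dom d Z F -> initial_in (Defs.bigU F) Y ->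
  #|Defs.bigU F| <= m -> type_colour lam Y (type_code F) = lam F.
Proof.
move=> hF iFY Fm; rewrite ffunE widen_set_code ?usetB_tau_initial // => S ST.
have [ne c2] := tau_small hF ST.
by split=> //; apply: subset_trans (tau_sub_below ST) (below_mono _ Fm).
Qed.

End TypeColouring.

Lemma ramsey_prop_size l m c N n : 0 < c -> ramsey_prop l m c N -> N <= n -> m <= n.
Proof.
move=> c0 ram leNn; have [X [<- _]] := ram n leNn (fun=> Ordinal c0).
by rewrite -[X in _ <= X]card_ord max_card.
Qed.

Section Canonical.
Variables (n' d r : nat) (V : Type).
Local Notation n := n'.+1.
Hypothesis hm : 2 * d <= n.
Variables (lam : {set {set 'I_n}} -> V) (X : {set 'I_n}).
Hypothesis cardX : #|X| = r + 2 * d - 1.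

Lemma type_colour_witness F : in_dom d (smallest r X) F ->
  exists2 Y : {set 'I_n}, Y \subset X /\ #|Y| = 2 * d &
    type_colour hm lam Y (type_code hm F) = lam F.
Proof.
move=> hF; have /andP[B0 B2d] := card_bigU hF.
have [|Y iY [YX cY]] :=
  initial_extension (j := 2 * d - #|Defs.bigU F|) _ (bigU_subset hF).
  by rewrite cardX; lia.
by exists Y; [split=> //; lia | exact: type_colourE hF iY B2d].
Qed.

Lemma canonical_in_smallest :
  (forall Y1 Y2 : {set 'I_n}, Y1 \subset X -> Y2 \subset X ->
     #|Y1| = 2 * d -> #|Y2| = 2 * d -> type_colour hm lam Y1 = type_colour hm lam Y2) ->
  canonical_in d lam (smallest r X).
Proof.
move=> mono F1 F2 h1 h2 etau.
have [Y1 [Y1X cY1] <-] := type_colour_witness h1.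
have [Y2 [Y2X cY2] <-] := type_colour_witness h2.
by rewrite /type_code etau (mono Y1 Y2).
Qed.

End Canonical.

Theorem corollary5p9 (n d r k : nat) :
  0 < n -> 0 < d -> 0 < r -> 0 < k ->
  forall N : nat,
    is_ramsey_number (2 * d) (r + 2 * d - 1) (2 ^ (k * 2 ^ (2 * d ^ 2 + d))) N ->
    N <= n ->
  forall lam : {set {set 'I_n}} -> 'Z_(2 ^ k),
    exists X : {set 'I_n}, #|X| = r /\ canonical_in d lam X.
Proof.
case: n => [//|n'] _ d0 r0 k0 N [ramN _] leNn lam.
have hm : 2 * d <= n'.+1.
  by apply: leq_trans (ramsey_prop_size _ ramN leNn); [lia | rewrite expn_gt0].
pose chi Y := cast_ord (card_type_colours_Zp d k0) (enum_rank (type_colour hm lam Y)).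
have [X [cardX mono]] := ramN _ leNn chi.
exists (smallest r X); split; first by rewrite card_smallest // cardX; lia.
apply: canonical_in_smallest cardX _ => Y1 Y2 Y1X Y2X cY1 cY2.
exact/enum_rank_inj/(cast_ord_inj (mono _ _ Y1X Y2X cY1 cY2)).
Qed.
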